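(* The equation $x+y+z=1$ with $x,y,z\in\mathcal{B}_{2,1}$ and $x\le y\le z$ has exactly two solutions: $$x=2-\sqrt3=[3,\overline{1,2}],\quad y=z=\frac{\sqrt3-1}{2}=[\overline{2,1}],$$ and $$x=y=\frac{2-\sqrt2}{2}=[3,\overline{2}],\quad z=\sqrt2-1=[\overline{2}].$$
   Context: For irrational $x\in(0,1)$, $x=[a_1(x),a_2(x),\dots]$ denotes its simple continued fraction expansion; an overline denotes a periodically repeated block. For a positive integer $B$ and $j\ge0$, $\mathcal{B}_{B,j}$ is the set of irrational $x\in(0,1)$ with $a_k(x)\le B+1$ for all $k\le j$ and $a_k(x)\le B$ for all $k>j$. Thus $\mathcal{B}_{2,1}$ consists of the irrationals $x\in(0,1)$ with $a_1(x)\le3$ and $a_k(x)\le2$ for all $k\ge2$. *)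

From Stdlib Require Import Reals ZArith.
Open Scope R_scope.

Definition irrational (x : R) : Prop :=
  forall p q : Z, q <> 0%Z -> x <> IZR p / IZR q.

Definition floorR (r : R) : Z := Int_part r.

Definition gauss (x : R) : R := / x - IZR (floorR (/ x)).

(* k-th partial quotient a_k(x), k >= 1:  a_k(x) = floor(1 / T^(k-1)(x)). *)
Definition cf_a (k : nat) (x : R) : Z :=
  floorR (/ (Nat.iter (Nat.pred k) gauss x)).

Definition inB (B : Z) (j : nat) (x : R) : Prop :=
  0 < x < 1 /\ irrational x /\
  forall k : nat, (1 <= k)%nat ->
    ((k <= j)%nat -> (cf_a k x <= B + 1)%Z) /\
    ((j < k)%nat -> (cf_a k x <= B)%Z).

From Stdlib Require Import Reals ZArith Znumtheory Lra Lia Psatz.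
Open Scope R_scope.

(* Every element of B_{2,1} is 1/(a + w) with a <= 3 and w in E_2 = B_{2,0}, and
   E_2 lies in [(sqrt 3 - 1)/2, sqrt 3 - 1], whose endpoints are [overline{2,1}]
   and [overline{1,2}].  These bounds leave only two patterns (3,2,2) and (3,3,2)
   for the first quotients of x <= y <= z.  For (3,2,2) the lower bounds already
   add up to 1, so they are attained.  For (3,3,2), the Moebius coordinate W = silver_coord that
   sends the fixed points sqrt 2 - 1 and -(sqrt 2 + 1) of w |-> 1/(2 + w) to 0
   and infinity turns that map into multiplication by 2 sqrt 2 - 3; the equation
   becomes a positively weighted sum of W-values of the three tails equal to 0.
   A tail beginning with 1 has a W-value too large to be compensated, so all
   tails begin with 2 and the equation passes to the next tails; iterating,
   W vanishes on all three tails, i.e. they all equal sqrt 2 - 1. *)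

Lemma le_div_of_mul_le n d c : 0 < d -> c * d <= n -> c <= n / d.
Proof. intros Hd H. apply Rmult_le_reg_r with d; auto. field_simplify; lra. Qed.

Lemma div_le_of_le_mul n d c : 0 < d -> n <= c * d -> n / d <= c.
Proof. intros Hd H. apply Rmult_le_reg_r with d; auto. field_simplify; lra. Qed.

Lemma le0_of_le_pow a c : 0 <= c < 1 -> (forall n, a <= c ^ n) -> a <= 0.
Proof.
  intros Hc H. destruct (Rle_or_lt a 0) as [|Ha]; auto. exfalso.
  destruct (pow_lt_1_zero c) with (y := a) as [N HN]; auto.
  - rewrite Rabs_pos_eq; lra.
  - specialize (HN N (le_n N)). specialize (H N).
    rewrite Rabs_pos_eq in HN; [lra | apply pow_le; lra].
Qed.

Lemma sqrt2_sq_approx : sqrt 2 * sqrt 2 = 2 /\ 1.41421 < sqrt 2 < 1.41422.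
Proof.
  assert (H : sqrt 2 * sqrt 2 = 2) by (apply sqrt_sqrt; lra).
  pose proof (sqrt_pos 2). split; [auto | split; nra].
Qed.

Lemma sqrt3_sq_approx : sqrt 3 * sqrt 3 = 3 /\ 1.73204 < sqrt 3 < 1.73206.
Proof.
  assert (H : sqrt 3 * sqrt 3 = 3) by (apply sqrt_sqrt; lra).
  pose proof (sqrt_pos 3). split; [auto | split; nra].
Qed.

(** * Irrational numbers *)

Lemma irrational_neq0 v : irrational v -> v <> 0.
Proof. intros Hi ->. apply (Hi 0%Z 1%Z); [lia | simpl; field]. Qed.

Lemma irrational_inv v : irrational v -> irrational (/ v).
Proof.
  intros Hi p q Hq E. pose proof (irrational_neq0 v Hi) as Hv.
  assert (Hp : p <> 0%Z).
  { intros ->. apply (Rinv_neq_0_compat v Hv). rewrite E. simpl; field.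
    now apply not_0_IZR. }
  apply (Hi q p Hp). rewrite <- (Rinv_inv v), E.
  field; split; now apply not_0_IZR.
Qed.

Lemma irrational_affine v m n d : irrational v -> n <> 0%Z -> d <> 0%Z ->
  irrational ((IZR m + IZR n * v) / IZR d).
Proof.
  intros Hi Hn Hd p q Hq E.
  apply (Hi (d * p - m * q) (n * q))%Z; [lia |].
  apply not_0_IZR in Hn, Hd, Hq.
  assert (Ev : v = (IZR p / IZR q * IZR d - IZR m) / IZR n)
    by (rewrite <- E; field; auto).
  rewrite Ev, minus_IZR, !mult_IZR. field. auto.
Qed.

Lemma irrational_sub_IZR v z : irrational v -> irrational (v - IZR z).
Proof.
  intro Hi. replace (v - IZR z) with ((IZR (- z) + IZR 1 * v) / IZR 1)
    by (rewrite opp_IZR; simpl; field).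
  apply irrational_affine; auto; lia.
Qed.

Open Scope Z_scope.

Lemma prime_square_neq p : prime p ->
  forall a b, b <> 0 -> a * a <> p * (b * b).
Proof.
  intros Hp. pose proof (prime_ge_2 p Hp) as Hp2.
  assert (Hdiv : forall a m, a * a = p * m -> exists c, a = p * c).
  { intros a m H. destruct (prime_mult p Hp a a) as [[c ->] | [c ->]];
      [exists m; lia | exists c; lia | exists c; lia]. }
  (* infinite descent on |b|: a = p c, then b = p d, and c^2 = p d^2 *)
  enough (H : forall n a b, Z.abs b < Z.of_nat n -> b <> 0 -> a * a <> p * (b * b))
    by (intros a b; apply (H (S (Z.to_nat (Z.abs b)))); lia).
  induction n as [|n IH]; intros a b Hn Hb E; [lia |].
  destruct (Hdiv a (b * b) E) as [c ->].
  assert (Eb : b * b = p * (c * c)) by nia.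
  destruct (Hdiv b (c * c) Eb) as [d ->].
  apply (IH c d); nia.
Qed.

Close Scope Z_scope.

Lemma irrational_sqrt_prime p : prime p -> irrational (sqrt (IZR p)).
Proof.
  intros Hp a b Hb E.
  assert (Hp0 : 0 <= IZR p) by (apply IZR_le; pose proof (prime_ge_2 p Hp); lia).
  apply (prime_square_neq p Hp a b Hb), eq_IZR. rewrite !mult_IZR.
  apply not_0_IZR in Hb.
  replace (IZR a) with (sqrt (IZR p) * IZR b) by (rewrite E; field; auto).
  rewrite <- (sqrt_sqrt (IZR p)) at 3 by auto. ring.
Qed.

Lemma irrational_sqrt2_affine m n d : n <> 0%Z -> d <> 0%Z ->
  irrational ((IZR m + IZR n * sqrt 2) / IZR d).
Proof. apply irrational_affine, (irrational_sqrt_prime 2), prime_2. Qed.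

Lemma irrational_sqrt3_affine m n d : n <> 0%Z -> d <> 0%Z ->
  irrational ((IZR m + IZR n * sqrt 3) / IZR d).
Proof. apply irrational_affine, (irrational_sqrt_prime 3), prime_3. Qed.

Lemma floorR_unique r z : IZR z <= r < IZR z + 1 -> floorR r = z.
Proof.
  intros [H1 H2]. unfold floorR, Int_part.
  enough (up r = (z + 1)%Z) by lia.
  symmetry. apply tech_up; rewrite plus_IZR; lra.
Qed.

Lemma floorR_bounds r : IZR (floorR r) <= r < IZR (floorR r) + 1.
Proof. unfold floorR. destruct (base_Int_part r). lra. Qed.

Lemma cf_a_1 v : cf_a 1 v = floorR (/ v).
Proof. reflexivity. Qed.

Lemma cf_a_gauss k v : cf_a (S k) (gauss v) = cf_a (S (S k)) v.
Proof. unfold cf_a. simpl Nat.pred. now rewrite Nat.iter_succ_r. Qed.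

Lemma gauss_irrational v : irrational v -> irrational (gauss v).
Proof. intro Hi. apply irrational_sub_IZR, irrational_inv, Hi. Qed.

Lemma gauss_bounds v : irrational v -> 0 < gauss v < 1.
Proof.
  intro Hi. pose proof (floorR_bounds (/ v)).
  pose proof (irrational_neq0 _ (gauss_irrational v Hi)).
  unfold gauss in *. lra.
Qed.

Lemma cf_a_1_pos v : 0 < v < 1 -> (1 <= cf_a 1 v)%Z.
Proof.
  intro Hv. rewrite cf_a_1. pose proof (floorR_bounds (/ v)).
  assert (1 < / v) by (rewrite <- Rinv_1; apply Rinv_lt_contravar; lra).
  enough (0 < floorR (/ v))%Z by lia. apply lt_0_IZR. lra.
Qed.

Lemma cf_expansion v : 0 < v -> v = 1 / (IZR (cf_a 1 v) + gauss v).
Proof.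
  intro Hv. unfold gauss. rewrite cf_a_1.
  replace (IZR (floorR (/ v)) + (/ v - IZR (floorR (/ v)))) with (/ v) by ring.
  field. lra.
Qed.

Lemma gauss_of_inv v w z : v * w = 1 -> IZR z <= w < IZR z + 1 ->
  gauss v = w - IZR z /\ cf_a 1 v = z.
Proof.
  intros H Hw. assert (Ew : / v = w).
  { assert (v <> 0) by (intros ->; lra).
    rewrite <- (Rmult_1_r (/ v)), <- H, <- Rmult_assoc, Rinv_l; lra. }
  rewrite cf_a_1. unfold gauss. now rewrite Ew, (floorR_unique w z Hw).
Qed.

Lemma inB_gauss B j v : inB B j v -> inB B (Nat.pred j) (gauss v).
Proof.
  intros [Hv [Hi Hk]].
  split; [now apply gauss_bounds | split; [now apply gauss_irrational |]].
  intros [|k] Hk1; [lia |]. rewrite cf_a_gauss.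
  destruct (Hk (S (S k))) as [H1 H2]; [lia |]. split; intro; [apply H1 | apply H2]; lia.
Qed.

Lemma inB_succ_of_gauss B j v : 0 < v < 1 -> irrational v ->
  (cf_a 1 v <= B + 1)%Z -> inB B j (gauss v) -> inB B (S j) v.
Proof.
  intros Hv Hi H1 [_ [_ Hk]]. split; [auto | split; [auto |]].
  intros [|[|k]] Hk1; [lia | split; [auto | lia] |].
  rewrite <- cf_a_gauss. destruct (Hk (S k)) as [Hle Hgt]; [lia |].
  split; intro; [apply Hle | apply Hgt]; lia.
Qed.

Lemma inB0_of_gauss_2cycle B v : 0 < v < 1 -> irrational v ->
  gauss (gauss v) = v -> (cf_a 1 v <= B)%Z -> (cf_a 1 (gauss v) <= B)%Z -> inB B 0 v.
Proof.
  intros Hv Hi Hvv H1 H2.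
  assert (Hk : forall k, (cf_a (S k) v <= B)%Z /\ (cf_a (S k) (gauss v) <= B)%Z).
  { induction k as [|k IH]; auto. rewrite <- !cf_a_gauss, Hvv. tauto. }
  split; [auto | split; [auto |]].
  intros [|k] Hk1; [lia | split; [lia | intros _; apply Hk]].
Qed.

Lemma inB20_expansion v : inB 2 0 v ->
  exists a w, (a = 1 \/ a = 2) /\ inB 2 0 w /\ v = 1 / (a + w).
Proof.
  intro H. pose proof (inB_gauss 2 0 v H) as Hg.
  destruct H as [Hv [_ Hk]]. pose proof (cf_a_1_pos v Hv).
  pose proof (proj2 (Hk 1%nat (le_n 1)) (Nat.lt_0_1)).
  exists (IZR (cf_a 1 v)), (gauss v).
  split; [| split; [auto | apply cf_expansion; lra]].
  assert (cf_a 1 v = 1 \/ cf_a 1 v = 2)%Z as [-> | ->] by lia; auto.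
Qed.

Lemma inB21_expansion v : inB 2 1 v ->
  exists a w, (a = 1 \/ a = 2 \/ a = 3) /\ inB 2 0 w /\ v = 1 / (a + w).
Proof.
  intro H. pose proof (inB_gauss 2 1 v H) as Hg.
  destruct H as [Hv [_ Hk]]. pose proof (cf_a_1_pos v Hv).
  pose proof (proj1 (Hk 1%nat (le_n 1)) (le_n 1)).
  exists (IZR (cf_a 1 v)), (gauss v).
  split; [| split; [auto | apply cf_expansion; lra]].
  assert (cf_a 1 v = 1 \/ cf_a 1 v = 2 \/ cf_a 1 v = 3)%Z as [-> | [-> | ->]] by lia;
    auto.
Qed.

(** * The range of E_2 = B_{2,0} *)

Lemma inB20_gt_third v : inB 2 0 v -> 1 / 3 < v.
Proof.
  intro H. destruct (inB20_expansion v H) as [a [w [Ha [[Hw _] ->]]]].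
  apply Rmult_lt_reg_r with (a + w); [lra |].
  field_simplify; destruct Ha; subst; lra.
Qed.

(* The inverse branches w |-> 1/(a + w) are 3/4-Lipschitz on (1/3, 1), and
   (sqrt 3 - 1)/2 = 1/(2 + (sqrt 3 - 1)), sqrt 3 - 1 = 1/(1 + (sqrt 3 - 1)/2). *)
Lemma inB20_near n v : inB 2 0 v ->
  (sqrt 3 - 1) / 2 - (3 / 4) ^ n <= v <= sqrt 3 - 1 + (3 / 4) ^ n.
Proof.
  destruct sqrt3_sq_approx as [S3 [S3a S3b]].
  revert v; induction n as [|n IH]; intros v Hv.
  - destruct Hv as [Hv _]. simpl. lra.
  - destruct (inB20_expansion v Hv) as [a [w [Ha [Hw Ev]]]].
    pose proof (inB20_gt_third w Hw). destruct (IH w Hw) as [L U].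
    assert (He : 0 < (3 / 4) ^ n) by (apply pow_lt; lra).
    set (e := (3 / 4) ^ n) in *. simpl. fold e.
    destruct Hw as [[_ Hw1] _].
    assert (Hva : v * (a + w) = 1) by (rewrite Ev; field; destruct Ha; subst; lra).
    split.
    + assert (v * (2 + w) >= 1) by (destruct Ha; subst; nra).
      destruct (Rle_or_lt ((sqrt 3 - 1) / 2 - 3 / 4 * e) v) as [| Hc]; [lra | exfalso].
      assert (((sqrt 3 - 1) / 2 - 3 / 4 * e - v) * (2 + w) > 0)
        by (apply Rmult_gt_0_compat; lra).
      assert ((sqrt 3 - 1) / 2 * (sqrt 3 - 1 + e - w) >= 0)
        by (apply Rle_ge, Rmult_le_pos; lra).
      nra.
    + assert (v * (1 + w) <= 1) by (destruct Ha; subst; nra).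
      destruct (Rle_or_lt v (sqrt 3 - 1 + 3 / 4 * e)) as [| Hc]; [lra | exfalso].
      assert ((v - (sqrt 3 - 1 + 3 / 4 * e)) * (1 + w) > 0)
        by (apply Rmult_gt_0_compat; lra).
      assert ((sqrt 3 - 1) * (w - ((sqrt 3 - 1) / 2 - e)) >= 0)
        by (apply Rle_ge, Rmult_le_pos; lra).
      nra.
Qed.

Lemma inB20_bounds v : inB 2 0 v -> (sqrt 3 - 1) / 2 <= v <= sqrt 3 - 1.
Proof.
  intro H. split.
  - enough ((sqrt 3 - 1) / 2 - v <= 0) by lra. apply (le0_of_le_pow _ (3 / 4)); [lra |].
    intro n. destruct (inB20_near n v H). lra.
  - enough (v - (sqrt 3 - 1) <= 0) by lra. apply (le0_of_le_pow _ (3 / 4)); [lra |].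
    intro n. destruct (inB20_near n v H). lra.
Qed.

Lemma inB20_approx v : inB 2 0 v -> 0.36602 <= v <= 0.73206.
Proof.
  intro H. destruct (inB20_bounds v H). destruct sqrt3_sq_approx as [_ [? ?]]. lra.
Qed.

Lemma inB20_inv_add_approx v : inB 2 0 v ->
  0.5773 <= 1 / (1 + v) <= 0.7321 /\ 0.366 <= 1 / (2 + v) <= 0.4227 /\
  0.2679 <= 1 / (3 + v) <= 0.2971.
Proof.
  intro H. destruct (inB20_approx v H).
  repeat split; solve [apply le_div_of_mul_le; lra | apply div_le_of_le_mul; lra].
Qed.

Lemma inB20_inv_add_lb a v : 0 < a -> inB 2 0 v ->
  1 / (a + (sqrt 3 - 1)) <= 1 / (a + v).
Proof.
  intros Ha H. destruct (inB20_bounds v H). destruct sqrt3_sq_approx as [_ [? ?]].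
  unfold Rdiv. rewrite !Rmult_1_l. apply Rinv_le_contravar; lra.
Qed.

(** * The Moebius coordinate centred at sqrt 2 - 1 = [overline 2] *)

Definition silver_coord (v : R) : R := (v - (sqrt 2 - 1)) / (v + sqrt 2 + 1).

Definition silver_weight (a v : R) : R :=
  (v + sqrt 2 + 1) / ((a + v) * (a + (sqrt 2 - 1))).

Lemma silver_coord_shift2 v : 0 <= v ->
  silver_coord (1 / (2 + v)) = (2 * sqrt 2 - 3) * silver_coord v.
Proof.
  destruct sqrt2_sq_approx as [S2 [S2a S2b]]. intro Hv. unfold silver_coord.
  field_simplify_eq; [| repeat split; nra].
  replace (sqrt 2 ^ 2) with 2 by (simpl; lra).
  replace (sqrt 2 ^ 3) with (2 * sqrt 2) by (simpl; nra).
  ring.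
Qed.

Lemma silver_coord_eq0 v : 0 < v -> silver_coord v = 0 -> v = sqrt 2 - 1.
Proof.
  destruct sqrt2_sq_approx as [_ [S2a _]]. unfold silver_coord. intros Hv H.
  apply (f_equal (fun t => t * (v + sqrt 2 + 1))) in H. field_simplify in H; lra.
Qed.

Lemma inv_add_sub_silver a v : 0 < a -> 0 <= v ->
  1 / (a + (sqrt 2 - 1)) - 1 / (a + v) = silver_weight a v * silver_coord v.
Proof.
  destruct sqrt2_sq_approx as [_ [S2a _]]. intros Ha Hv.
  unfold silver_weight, silver_coord. field. lra.
Qed.

Lemma inB20_silver_coord_bounds v : inB 2 0 v -> -0.0174 <= silver_coord v <= 1.
Proof.
  intro H. destruct (inB20_approx v H). destruct sqrt2_sq_approx as [_ [? ?]].
  unfold silver_coord. split; [apply le_div_of_mul_le | apply div_le_of_le_mul]; lra.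
Qed.

Lemma inB20_silver_coord_shift1 w : inB 2 0 w -> 0.054 <= silver_coord (1 / (1 + w)).
Proof.
  intro H. destruct (inB20_inv_add_approx w H) as [[? ?] _].
  destruct sqrt2_sq_approx as [_ [? ?]].
  unfold silver_coord. apply le_div_of_mul_le; lra.
Qed.

Lemma inB20_silver_weight_bounds v : inB 2 0 v ->
  0.4769 <= silver_weight 2 v <= 0.4868 /\ 0.2418 <= silver_weight 3 v <= 0.2470.
Proof.
  intro H. destruct (inB20_approx v H). destruct sqrt2_sq_approx as [_ [? ?]].
  unfold silver_weight.
  repeat split; solve [apply le_div_of_mul_le; nra | apply div_le_of_le_mul; nra].
Qed.

Lemma inB20_first_quotient_2_or_silver_large v : inB 2 0 v ->
  (exists w, inB 2 0 w /\ v = 1 / (2 + w)) \/ 0.054 <= silver_coord v.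
Proof.
  intro H. destruct (inB20_expansion v H) as [a [w [[-> | ->] [Hw ->]]]].
  - right. now apply inB20_silver_coord_shift1.
  - left. eauto.
Qed.

Section SilverDescent.

Variables c1 c2 c3 : R.
Hypothesis Hc1 : 0.2418 <= c1 <= 0.2470.
Hypothesis Hc2 : 0.2418 <= c2 <= 0.2470.
Hypothesis Hc3 : 0.4769 <= c3 <= 0.4868.

Definition silver_balanced (v1 v2 v3 : R) : Prop :=
  inB 2 0 v1 /\ inB 2 0 v2 /\ inB 2 0 v3 /\
  c1 * silver_coord v1 + c2 * silver_coord v2 + c3 * silver_coord v3 = 0.

Lemma silver_balanced_shift v1 v2 v3 : silver_balanced v1 v2 v3 ->
  exists w1 w2 w3, silver_balanced w1 w2 w3 /\
    v1 = 1 / (2 + w1) /\ v2 = 1 / (2 + w2) /\ v3 = 1 / (2 + w3).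
Proof.
  intros [H1 [H2 [H3 E]]].
  pose proof (inB20_silver_coord_bounds v1 H1).
  pose proof (inB20_silver_coord_bounds v2 H2).
  pose proof (inB20_silver_coord_bounds v3 H3).
  (* each term is at least -0.0174 c_i, and a term with silver_coord >= 0.054 is too big *)
  destruct (inB20_first_quotient_2_or_silver_large v1 H1) as [[w1 [F1 E1]] | L1]; [| nra].
  destruct (inB20_first_quotient_2_or_silver_large v2 H2) as [[w2 [F2 E2]] | L2]; [| nra].
  destruct (inB20_first_quotient_2_or_silver_large v3 H3) as [[w3 [F3 E3]] | L3]; [| nra].
  exists w1, w2, w3. split; [| tauto].
  split; [auto | split; [auto | split; [auto |]]].
  destruct sqrt2_sq_approx as [_ [S2a S2b]].
  pose proof (inB20_approx w1 F1). pose proof (inB20_approx w2 F2).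
  pose proof (inB20_approx w3 F3).
  rewrite E1, E2, E3, !silver_coord_shift2 in E by lra.
  apply Rmult_eq_reg_l with (2 * sqrt 2 - 3); lra.
Qed.

Lemma silver_balanced_coord_small n v1 v2 v3 : silver_balanced v1 v2 v3 ->
  Rabs (silver_coord v1) <= (1 / 5) ^ n /\ Rabs (silver_coord v2) <= (1 / 5) ^ n /\
  Rabs (silver_coord v3) <= (1 / 5) ^ n.
Proof.
  revert v1 v2 v3; induction n as [|n IH]; intros v1 v2 v3 Hb.
  - destruct Hb as [H1 [H2 [H3 _]]]. simpl.
    pose proof (inB20_silver_coord_bounds v1 H1).
    pose proof (inB20_silver_coord_bounds v2 H2).
    pose proof (inB20_silver_coord_bounds v3 H3).
    repeat split; apply Rabs_le; lra.
  - destruct (silver_balanced_shift v1 v2 v3 Hb) as [w1 [w2 [w3 [Hw [-> [-> ->]]]]]].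
    destruct (IH w1 w2 w3 Hw) as [B1 [B2 B3]].
    destruct Hw as [F1 [F2 [F3 _]]].
    pose proof (inB20_approx w1 F1). pose proof (inB20_approx w2 F2).
    pose proof (inB20_approx w3 F3).
    destruct sqrt2_sq_approx as [_ [S2a S2b]].
    assert (HK : Rabs (2 * sqrt 2 - 3) <= 1 / 5) by (apply Rabs_le; lra).
    simpl. rewrite !silver_coord_shift2, !Rabs_mult by lra.
    repeat split; apply Rmult_le_compat; auto using Rabs_pos.
Qed.

Lemma silver_balanced_fixed v1 v2 v3 : silver_balanced v1 v2 v3 ->
  v1 = sqrt 2 - 1 /\ v2 = sqrt 2 - 1 /\ v3 = sqrt 2 - 1.
Proof.
  intro Hb.
  assert (Hzero : forall v, (forall n, Rabs (silver_coord v) <= (1 / 5) ^ n) ->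
                            silver_coord v = 0).
  { intros v Hn. destruct (Req_dec (silver_coord v) 0) as [| Hne]; auto. exfalso.
    apply (Rabs_no_R0 _ Hne), Rle_antisym; [| apply Rabs_pos].
    apply (le0_of_le_pow _ (1 / 5)); [lra | auto]. }
  pose proof (fun n => silver_balanced_coord_small n v1 v2 v3 Hb) as Hsmall.
  destruct Hb as [H1 [H2 [H3 _]]].
  pose proof (inB20_approx v1 H1). pose proof (inB20_approx v2 H2).
  pose proof (inB20_approx v3 H3).
  repeat split; apply silver_coord_eq0; try lra; apply Hzero; apply Hsmall.
Qed.

End SilverDescent.

(** * The two admissible patterns of first quotients *)

Lemma solutions_322 s t u : inB 2 0 s -> inB 2 0 t -> inB 2 0 u ->
  1 / (3 + s) + 1 / (2 + t) + 1 / (2 + u) = 1 ->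
  1 / (3 + s) = 2 - sqrt 3 /\ 1 / (2 + t) = (sqrt 3 - 1) / 2 /\
  1 / (2 + u) = (sqrt 3 - 1) / 2.
Proof.
  intros Hs Ht Hu E.
  destruct sqrt3_sq_approx as [S3 [S3a S3b]].
  assert (E3 : 1 / (3 + (sqrt 3 - 1)) = 2 - sqrt 3) by (field_simplify_eq; nra).
  assert (E2 : 1 / (2 + (sqrt 3 - 1)) = (sqrt 3 - 1) / 2) by (field_simplify_eq; nra).
  pose proof (inB20_inv_add_lb 3 s ltac:(lra) Hs).
  pose proof (inB20_inv_add_lb 2 t ltac:(lra) Ht).
  pose proof (inB20_inv_add_lb 2 u ltac:(lra) Hu).
  lra.
Qed.

Lemma solutions_332 s t u : inB 2 0 s -> inB 2 0 t -> inB 2 0 u ->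
  1 / (3 + s) + 1 / (3 + t) + 1 / (2 + u) = 1 ->
  s = sqrt 2 - 1 /\ t = sqrt 2 - 1 /\ u = sqrt 2 - 1.
Proof.
  intros Hs Ht Hu E.
  destruct sqrt2_sq_approx as [S2 [S2a S2b]].
  pose proof (inB20_approx s Hs). pose proof (inB20_approx t Ht).
  pose proof (inB20_approx u Hu).
  destruct (inB20_silver_weight_bounds s Hs) as [_ Ws].
  destruct (inB20_silver_weight_bounds t Ht) as [_ Wt].
  destruct (inB20_silver_weight_bounds u Hu) as [Wu _].
  (* sqrt 2 - 1 solves the same equation, and the differences are weighted coordinates *)
  assert (Hfix : 2 * (1 / (3 + (sqrt 2 - 1))) + 1 / (2 + (sqrt 2 - 1)) = 1)
    by (field_simplify_eq; nra).
  apply (silver_balanced_fixed (silver_weight 3 s) (silver_weight 3 t) (silver_weight 2 u));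
    auto.
  split; [auto | split; [auto | split; [auto |]]].
  rewrite <- !inv_add_sub_silver by lra. lra.
Qed.

Lemma solutions_forward x y z :
  inB 2 1 x -> inB 2 1 y -> inB 2 1 z -> x <= y -> y <= z -> x + y + z = 1 ->
  (x = 2 - sqrt 3 /\ y = (sqrt 3 - 1) / 2 /\ z = (sqrt 3 - 1) / 2) \/
  (x = (2 - sqrt 2) / 2 /\ y = (2 - sqrt 2) / 2 /\ z = sqrt 2 - 1).
Proof.
  intros Hx Hy Hz Lxy Lyz E.
  destruct (inB21_expansion x Hx) as [a [s [Ha [Hs ->]]]].
  destruct (inB21_expansion y Hy) as [b [t [Hb [Ht ->]]]].
  destruct (inB21_expansion z Hz) as [c [u [Hc [Hu ->]]]].
  pose proof (inB20_inv_add_approx s Hs).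
  pose proof (inB20_inv_add_approx t Ht).
  pose proof (inB20_inv_add_approx u Hu).
  destruct Ha as [-> | [-> | ->]]; destruct Hb as [-> | [-> | ->]];
    destruct Hc as [-> | [-> | ->]]; try (exfalso; lra).
  - left. now apply solutions_322.
  - right. destruct (solutions_332 s t u Hs Ht Hu E) as [-> [-> ->]].
    destruct sqrt2_sq_approx as [S2 [? ?]].
    repeat split; field_simplify_eq; nra.
Qed.

Lemma solutions_in_B21 :
  inB 2 1 (2 - sqrt 3) /\ inB 2 1 ((sqrt 3 - 1) / 2) /\
  inB 2 1 ((2 - sqrt 2) / 2) /\ inB 2 1 (sqrt 2 - 1).
Proof.
  destruct sqrt3_sq_approx as [S3 [S3a S3b]]. destruct sqrt2_sq_approx as [S2 [S2a S2b]].
  assert (I3a : irrational (2 - sqrt 3)).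
  { replace (2 - sqrt 3) with ((IZR 2 + IZR (-1) * sqrt 3) / IZR 1) by (simpl; field).
    apply irrational_sqrt3_affine; lia. }
  assert (I3b : irrational (sqrt 3 - 1)).
  { replace (sqrt 3 - 1) with ((IZR (-1) + IZR 1 * sqrt 3) / IZR 1) by (simpl; field).
    apply irrational_sqrt3_affine; lia. }
  assert (I3c : irrational ((sqrt 3 - 1) / 2)).
  { replace ((sqrt 3 - 1) / 2) with ((IZR (-1) + IZR 1 * sqrt 3) / IZR 2) by (simpl; field).
    apply irrational_sqrt3_affine; lia. }
  assert (I2a : irrational ((2 - sqrt 2) / 2)).
  { replace ((2 - sqrt 2) / 2) with ((IZR 2 + IZR (-1) * sqrt 2) / IZR 2) by (simpl; field).
    apply irrational_sqrt2_affine; lia. }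
  assert (I2b : irrational (sqrt 2 - 1)).
  { replace (sqrt 2 - 1) with ((IZR (-1) + IZR 1 * sqrt 2) / IZR 1) by (simpl; field).
    apply irrational_sqrt2_affine; lia. }
  destruct (gauss_of_inv (2 - sqrt 3) (2 + sqrt 3) 3) as [G3a C3a]; [nra | simpl; lra |].
  destruct (gauss_of_inv (sqrt 3 - 1) ((sqrt 3 + 1) / 2) 1) as [G3b C3b]; [nra | simpl; lra |].
  destruct (gauss_of_inv ((sqrt 3 - 1) / 2) (sqrt 3 + 1) 2) as [G3c C3c]; [nra | simpl; lra |].
  destruct (gauss_of_inv ((2 - sqrt 2) / 2) (2 + sqrt 2) 3) as [G2a C2a]; [nra | simpl; lra |].
  destruct (gauss_of_inv (sqrt 2 - 1) (sqrt 2 + 1) 2) as [G2b C2b]; [nra | simpl; lra |].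
  replace (2 + sqrt 3 - IZR 3) with (sqrt 3 - 1) in G3a by (simpl; ring).
  replace ((sqrt 3 + 1) / 2 - IZR 1) with ((sqrt 3 - 1) / 2) in G3b by (simpl; field).
  replace (sqrt 3 + 1 - IZR 2) with (sqrt 3 - 1) in G3c by (simpl; ring).
  replace (2 + sqrt 2 - IZR 3) with (sqrt 2 - 1) in G2a by (simpl; ring).
  replace (sqrt 2 + 1 - IZR 2) with (sqrt 2 - 1) in G2b by (simpl; ring).
  assert (F3 : inB 2 0 (sqrt 3 - 1)).
  { apply inB0_of_gauss_2cycle; [lra | auto | now rewrite G3b | lia | rewrite G3b; lia]. }
  assert (F2 : inB 2 0 (sqrt 2 - 1)).
  { apply inB0_of_gauss_2cycle; [lra | auto | now rewrite !G2b | lia | rewrite G2b; lia]. }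
  split; [| split; [| split]]; apply inB_succ_of_gauss; auto; try lra; try lia.
  - now rewrite G3a.
  - now rewrite G3c.
  - now rewrite G2a.
  - now rewrite G2b.
Qed.

Theorem mainTheorem6 :
  forall x y z : R,
    (inB 2 1 x /\ inB 2 1 y /\ inB 2 1 z /\ x <= y /\ y <= z /\ x + y + z = 1)
    <->
    ((x = 2 - sqrt 3 /\ y = (sqrt 3 - 1) / 2 /\ z = (sqrt 3 - 1) / 2) \/
     (x = (2 - sqrt 2) / 2 /\ y = (2 - sqrt 2) / 2 /\ z = sqrt 2 - 1)).
Proof.
  intros x y z. split.
  - intros [Hx [Hy [Hz [Lxy [Lyz E]]]]]. now apply solutions_forward.
  - destruct solutions_in_B21 as [A [B [C D]]].
    destruct sqrt3_sq_approx as [_ [? ?]]. destruct sqrt2_sq_approx as [_ [? ?]].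
    intros [[-> [-> ->]] | [-> [-> ->]]];
      (split; [| split; [| split; [| split; [| split]]]]); auto; lra.
Qed.
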